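(* Let $a_{1}<a_{2}<a_{3}<\cdots$ be a strictly increasing infinite sequence of positive integers, let $A=\{a_{1},a_{2},a_{3},\ldots\}$, and let $n>0$ be an integer such that: (1) whenever $m>n$, there exist indices $i<r\leq s<j$ with $a_{m}=a_{i}+a_{j}=a_{r}+a_{s}$; and (2) whenever $a=a_{i}+a_{j}=a_{r}+a_{s}>a_{n}$ for some indices $i<r<s<j$, then $a=a_{m}$ for some $m>n$. Suppose $d_{1},d_{2},x,y$ are integers such that $x\neq d_{1}$, $d_{1}\neq d_{2}$, $d_{2}\neq y$, \[ \{d_{1},2d_{1},x,x+d_{1},x+2d_{1}\}\cup\{d_{2},2d_{2},y,y+d_{2},y+2d_{2}\}\subseteq A, \] $\{x,x+d_{1}\}\cap\{y,y+d_{2}\}\neq\varnothing$, and $d_{1}+d_{2}>a_{n}$. Then there is an integer $k\geq1$ such that every positive multiple of $k$ belongs to $A$. *)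

From Stdlib Require Import ZArith Lia.
Open Scope Z_scope.

(* The set A = {a_1, a_2, ...}: indices start at 1; a 0 is unused. *)
Definition inA (a : nat -> Z) (v : Z) : Prop :=
  exists i : nat, (1 <= i)%nat /\ a i = v.

(* Take the larger difference
   [d = max d1 d2] with its progression [u, u + d, u + 2d] (so [u + 3d > 2d >=
   d1 + d2 > a_n]).  The relation [d + (u + (t+1)d) = 2d + (u + t d)]
   with [d < 2d] and [u + t d <> 2d] extends the progression [u + t d]
   forever.  Then [(u + d) + (j u + (M-1) d) = u + (j u + M d)] adds one more
   [u] at a time, so [j u + M d] lies in [A] whenever [M >= 2j]; in particular
   every multiple of [u + 2d] does. *)

From Stdlib Require Import ZArith Lia.
Open Scope Z_scope.

Definition sum_closed_above (A : Z -> Prop) (N : Z) : Prop :=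
  forall p q r s, A p -> A q -> A r -> A s ->
  p < q -> q < r -> r < s -> p + s = q + r -> N < p + s -> A (p + s).

Section SumClosedAbove.
Variables (A : Z -> Prop) (N : Z).
Hypothesis closedA : sum_closed_above A N.

Lemma sum_closed_above_unordered p q r s : A p -> A q -> A r -> A s ->
  p < q -> p < r -> q < s -> r < s -> q <> r ->
  p + s = q + r -> N < p + s -> A (p + s).
Proof.
  intros Ap Aq Ar As_ pq pr qs rs qr E G.
  destruct (Z.lt_total q r) as [lt|[eq|gt]]; [| contradiction |].
  - exact (closedA p q r s Ap Aq Ar As_ pq lt rs E G).
  - apply (closedA p r q s); auto; lia.
Qed.

Lemma arith_prog_mem u d : 0 < u -> 0 < d -> u <> d ->
  A d -> A (2 * d) -> A u -> A (u + d) -> A (u + 2 * d) -> N < u + 3 * d ->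
  forall t, 0 <= t -> A (u + t * d).
Proof.
  intros hu hd ud Ad A2d Au Aud Au2d G.
  assert (step : forall t, 1 <= t -> A (u + t * d) -> A (u + (t + 1) * d) ->
    A (u + (t + 2) * d)).
  { intros t ht At At1.
    replace (u + (t + 2) * d) with (d + (u + (t + 1) * d)) by ring.
    apply (sum_closed_above_unordered d (2 * d) (u + t * d)); auto; try nia.
    intro E; assert (t = 1 \/ 2 <= t) as [->|] by lia; nia. }
  assert (pair : forall t, 0 <= t -> A (u + t * d) /\ A (u + (t + 1) * d)).
  { apply natlike_ind.
    - split; [now rewrite Z.mul_0_l, Z.add_0_r | now rewrite Z.mul_1_l].
    - intros t ht [At At1]; unfold Z.succ; split; [exact At1|].
      replace (t + 1 + 1) with (t + 2) by ring.
      assert (t = 0 \/ 1 <= t) as [->|] by lia; [exact Au2d | auto]. }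
  intros t ht; apply (pair t ht).
Qed.

Lemma lattice_mem u d : 0 < u -> 0 < d -> N < u + 3 * d ->
  (forall t, 0 <= t -> A (u + t * d)) ->
  forall j M, 1 <= j -> 2 * j <= M -> A (j * u + M * d).
Proof.
  intros hu hd G AP.
  pose proof (AP 0 (Z.le_refl 0)) as Au; rewrite Z.mul_0_l, Z.add_0_r in Au.
  pose proof (AP 1 ltac:(lia)) as Aud; rewrite Z.mul_1_l in Aud.
  assert (layer : forall i, 0 <= i ->
    forall M, 2 * (i + 1) <= M -> A ((i + 1) * u + M * d)).
  { apply (natlike_ind (fun i => forall M, 2 * (i + 1) <= M ->
      A ((i + 1) * u + M * d))).
    - intros M hM; rewrite Z.mul_1_l; apply AP; lia.
    - intros i hi IH M hM; unfold Z.succ.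
      replace ((i + 1 + 1) * u + M * d) with (u + ((i + 1) * u + M * d)) by ring.
      apply (sum_closed_above_unordered u (u + d) ((i + 1) * u + (M - 1) * d));
        auto; try apply IH; try lia; nia. }
  intros j M hj hM; replace j with (j - 1 + 1) by ring; apply layer; lia.
Qed.

Lemma multiples_mem u d : 0 < u -> 0 < d -> u <> d ->
  A d -> A (2 * d) -> A u -> A (u + d) -> A (u + 2 * d) -> N < u + 3 * d ->
  forall m, 1 <= m -> A ((u + 2 * d) * m).
Proof.
  intros hu hd ud Ad A2d Au Aud Au2d G m hm.
  replace ((u + 2 * d) * m) with (m * u + (2 * m) * d) by ring.
  apply lattice_mem; try lia.
  exact (arith_prog_mem u d hu hd ud Ad A2d Au Aud Au2d G).
Qed.

End SumClosedAbove.

Section Sequence.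
Variable a : nat -> Z.
Hypothesis Hinc : forall i j : nat, (1 <= i)%nat -> (i < j)%nat -> a i < a j.

Lemma index_lt_of_value_lt i j : (1 <= i)%nat -> (1 <= j)%nat ->
  a i < a j -> (i < j)%nat.
Proof.
  intros hi hj lt; destruct (Nat.lt_trichotomy i j) as [|[->|ji]]; [easy|lia|].
  specialize (Hinc j i hj ji); lia.
Qed.

Lemma inA_sum_closed_above (n : nat) :
  (forall (v : Z) (i r s j : nat),
     (1 <= i)%nat -> (i < r)%nat -> (r < s)%nat -> (s < j)%nat ->
     v = a i + a j -> v = a r + a s -> v > a n ->
     exists m : nat, (n < m)%nat /\ v = a m) ->
  sum_closed_above (inA a) (a n).
Proof.
  intros H2 p q r s [i [hi <-]] [k [hk <-]] [l [hl <-]] [j [hj <-]] ik kl lj E G.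
  destruct (H2 (a i + a j) i k l j) as [m [hm em]]; try lia.
  1-3: now apply index_lt_of_value_lt.
  exists m; split; [lia | auto].
Qed.

End Sequence.

Theorem lemma2 (a : nat -> Z) (n : nat) (d1 d2 x y : Z)
  (Hpos : forall i : nat, (1 <= i)%nat -> 0 < a i)
  (Hinc : forall i j : nat, (1 <= i)%nat -> (i < j)%nat -> a i < a j)
  (Hn : (0 < n)%nat)
  (H1 : forall m : nat, (n < m)%nat ->
        exists i r s j : nat,
          (1 <= i)%nat /\ (i < r)%nat /\ (r <= s)%nat /\ (s < j)%nat /\
          a m = a i + a j /\ a m = a r + a s)
  (H2 : forall (v : Z) (i r s j : nat),
        (1 <= i)%nat -> (i < r)%nat -> (r < s)%nat -> (s < j)%nat ->
        v = a i + a j -> v = a r + a s -> v > a n ->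
        exists m : nat, (n < m)%nat /\ v = a m)
  (Hxd1 : x <> d1) (Hd12 : d1 <> d2) (Hd2y : d2 <> y)
  (HA1 : inA a d1 /\ inA a (2 * d1) /\ inA a x /\ inA a (x + d1) /\ inA a (x + 2 * d1))
  (HA2 : inA a d2 /\ inA a (2 * d2) /\ inA a y /\ inA a (y + d2) /\ inA a (y + 2 * d2))
  (Hmeet : exists z : Z, (z = x \/ z = x + d1) /\ (z = y \/ z = y + d2))
  (Hsum : d1 + d2 > a n) :
  exists k : Z, 1 <= k /\ forall m : Z, 1 <= m -> inA a (k * m).
Proof.
  pose proof (inA_sum_closed_above a Hinc n H2) as closed.
  assert (pos : forall v, inA a v -> 0 < v) by (intros v [i [hi <-]]; auto).
  destruct HA1 as [Ad1 [A2d1 [Ax [Axd1 Ax2d1]]]].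
  destruct HA2 as [Ad2 [A2d2 [Ay [Ayd2 Ay2d2]]]].
  pose proof (pos _ Ad1); pose proof (pos _ Ax).
  pose proof (pos _ Ad2); pose proof (pos _ Ay).
  destruct (Z.le_ge_cases d2 d1).
  - exists (x + 2 * d1); split; [lia|].
    apply multiples_mem with (N := a n); auto; lia.
  - exists (y + 2 * d2); split; [lia|].
    apply multiples_mem with (N := a n); auto; lia.
Qed.
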